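(* Let $\mathcal{F}=\mathcal{B}(K_3)$. Then, as $k\to\infty$, $$\frac{k}{2}-o(k)\;\le\; R_3(\mathcal{F},k)\;\le\;\frac{3k}{4}+o(k).$$
   Context: For a graph $G$, a hypergraph $H$ is a Berge-$G$ hypergraph if there are an injective map $\phi:V(G)\to V(H)$ and pairwise distinct hyperedges $e_{xy}\in E(H)$, one for each $xy\in E(G)$, with $\phi(x),\phi(y)\in e_{xy}$. $\mathcal{B}(G)$ denotes the family of all Berge-$G$ hypergraphs. $K_n^r$ denotes the complete $r$-uniform hypergraph on $n$ vertices. For a family $\mathcal{H}$ of $r$-uniform hypergraphs and integers $k\ge 2$, $r\ge 2$, the Ramsey number $R_r(\mathcal{H},k)$ is the smallest integer $n$ such that every coloring of the hyperedges of $K_n^r$ with $k$ colors contains a monochromatic subhypergraph belonging to $\mathcal{H}$. *)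

From HB Require Import structures.
From mathcomp Require Import all_boot all_order all_algebra.
From Stdlib Require Import ClassicalEpsilon.
Set Implicit Arguments. Unset Strict Implicit. Unset Printing Implicit Defensive.

(* The complete 3-uniform hypergraph K_n^3 has vertex set 'I_n and hyperedges
   the 3-element subsets of 'I_n.  A k-colouring of its hyperedges is given by
   a finite function c : {set 'I_n} -> 'I_k (only its values on 3-sets matter). *)

Definition mono_berge_triangle (n k : nat) (c : {ffun {set 'I_n} -> 'I_k}) : bool :=
  [exists i : 'I_k, exists a : 'I_n, exists b : 'I_n, exists d : 'I_n,
   exists e1 : {set 'I_n}, exists e2 : {set 'I_n}, exists e3 : {set 'I_n},
     [&& (a != b), (b != d), (a != d),
         (e1 != e2), (e2 != e3), (e1 != e3),
         (#|e1| == 3), (#|e2| == 3), (#|e3| == 3),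
         (a \in e1) && (b \in e1), (b \in e2) && (d \in e2),
         (a \in e3) && (d \in e3) &
         [&& c e1 == i, c e2 == i & c e3 == i]]].

Definition ramsey_prop (k n : nat) : bool :=
  [forall c : {ffun {set 'I_n} -> 'I_k}, mono_berge_triangle c].

(* R_3(B(K_3), k): the smallest n with ramsey_prop k n (0 if none exists;
   such n does exist for every k, so this default is never used). *)
Definition R3_BK3 (k : nat) : nat :=
  match excluded_middle_informative (exists n, ramsey_prop k n) with
  | left h => ex_minn h
  | right _ => 0
  end.

From HB Require Import structures.
From mathcomp Require Import all_boot all_order all_algebra zify ring lra.
From Stdlib Require Import ClassicalEpsilon.
Set Implicit Arguments. Unset Strict Implicit. Unset Printing Implicit Defensive.

(* Upper bound: say an edge of a 3-graph owns a pair of vertices if it is the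
   only edge containing it.  In a Berge-triangle-free 3-graph two unowned pairs
   of an edge cannot share a vertex, so every edge owns two pairs through a
   common vertex; these pairs form a triangle-free graph with 2|H| edges, and
   Mantel's theorem gives 8|H| <= n^2.  Averaging over the k colour classes of
   the C(n,3) edges gives R <= 3k/4 + O(1).

   Lower bound: cut [0, c 2^m) into dyadic blocks of sizes c 2^j.  An edge that
   is not inside a bottom block has a level j at which it splits into a pair
   {x, y} inside one block and a vertex z in the sibling block; colour it by j,
   the parity of the block of x and (x + y) mod c 2^j.  In such a colour class
   the pairs {x, y} form a matching and every edge has exactly one vertex of
   the other parity, which rules out Berge triangles.  Edges inside a bottom
   block are coloured by their residues mod c, so these classes are pairwise
   disjoint.  This uses 2^c + 2 c 2^m colours on c 2^m vertices, hence
   R >= k/2 - o(k) when c grows slowly. *)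

Section ThreeSets.
Variable T : finType.
Implicit Types (x y z : T) (e : {set T}).

Lemma set3C12 x y z : [set x; y; z] = [set y; x; z].
Proof. by apply/setP=> t; rewrite !inE (orbC (t == x)). Qed.

Lemma set3_rot x y z : [set x; y; z] = [set y; z; x].
Proof. by apply/setP=> t; rewrite !inE; case: (t == x); case: (t == y); case: (t == z). Qed.

Lemma cards3 x y z : x != y -> y != z -> x != z -> #|[set x; y; z]| = 3.
Proof.
move=> xy yz xz; rewrite -setUA cardsU1 cards2 yz !inE.
by rewrite (negbTE xy) (negbTE xz).
Qed.

Lemma card3_set3 e x y z : #|e| = 3 -> x \in e -> y \in e -> z \in e ->
  x != y -> y != z -> x != z -> e = [set x; y; z].
Proof.
move=> e3 xe ye ze xy yz xz; apply/esym/eqP.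
rewrite eqEcard cards3 // e3 leqnn andbT.
by apply/subsetP=> t; rewrite !inE => /orP[/orP[]|] /eqP->.
Qed.

Lemma card3_apart e z : #|e| = 3 -> z \in e ->
  exists x y, [/\ x != y, x != z, y != z & e = [set x; y; z]].
Proof.
move=> e3 ze; have /cards2P[x [y [xy exy]]] : #|e :\ z| == 2.
  by move: e3; rewrite (cardsD1 z) ze add1n => -[->].
have /setD1P[xz _] : x \in e :\ z by rewrite exy !inE eqxx.
have /setD1P[yz _] : y \in e :\ z by rewrite exy !inE eqxx orbT.
by exists x, y; rewrite -exy setUC setD1K.
Qed.

Lemma card3_third e x y : #|e| = 3 -> x \in e -> y \in e -> x != y ->
  exists z, [/\ x != z, y != z & e = [set x; y; z]].
Proof.
move=> e3 xe ye xy; have [u [v [uv ux vx ee]]] := card3_apart e3 xe; subst e.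
move: ye; rewrite !inE (eq_sym y x) (negbTE xy) orbF => /orP[]/eqP yE; subst y.
- by exists v; rewrite (eq_sym x) vx uv 2!set3_rot.
- by exists u; rewrite (eq_sym x) ux (eq_sym v) uv set3C12 2!set3_rot.
Qed.

Lemma card3P e : #|e| = 3 ->
  exists x y z, [/\ x != y, y != z, x != z & e = [set x; y; z]].
Proof.
move=> e3; have /card_gt0P[z ze] : 0 < #|e| by rewrite e3.
have [x [y [xy xz yz ee]]] := card3_apart e3 ze.
by exists x, y, z.
Qed.

End ThreeSets.

Definition berge_triangle (T : finType) (H : {set {set T}}) : Prop :=
  exists a b d e1 e2 e3,
  [/\ [/\ a != b, b != d & a != d], [/\ e1 != e2, e2 != e3 & e1 != e3],
      [/\ e1 \in H, e2 \in H & e3 \in H] &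
      [/\ (a \in e1) && (b \in e1), (b \in e2) && (d \in e2)
        & (a \in e3) && (d \in e3)]].

Definition colour_class (T : finType) (C : eqType) (c : {set T} -> C) (i : C) :=
  [set e : {set T} | (#|e| == 3) && (c e == i)].

Lemma berge_triangleS (T : finType) (H H' : {set {set T}}) :
  H \subset H' -> berge_triangle H -> berge_triangle H'.
Proof.
move=> /subsetP sHH' [a [b [d [e1 [e2 [e3 [abd es [h1 h2 h3] ms]]]]]]].
by exists a, b, d, e1, e2, e3; split=> //; split; apply: sHH'.
Qed.

Lemma linear_berge_triangle_free (T : finType) (H : {set {set T}}) :
  {in H &, forall e f : {set T}, forall u, u \in e -> u \in f -> e = f} -> ~ berge_triangle H.
Proof.
move=> lin [a [b [d [e1 [e2 [e3 [_ [e12 _ _] [h1 h2 _] [/andP[_ b1] /andP[b2 _] _]]]]]]]].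
by move/eqP: e12; apply; apply: lin b1 b2.
Qed.

Lemma mono_berge_triangleP n k (c : {ffun {set 'I_n} -> 'I_k}) :
  reflect (exists i, berge_triangle (colour_class c i)) (mono_berge_triangle c).
Proof.
apply: (iffP existsP) => [[i]|[i [a [b [d [e1 [e2 [e3 [[ab bd ad] [e12 e23 e13]]]]]]]]]].
  move=> /existsP[a /existsP[b /existsP[d /existsP[e1 /existsP[e2 /existsP[e3]]]]]].
  move=> /and5P[ab bd ad e12 /and5P[e23 e13 c1 c2 /and5P[c3 m1 m2 m3 /and3P[i1 i2 i3]]]].
  by exists i, a, b, d, e1, e2, e3; split; rewrite // !inE ?c1 ?c2 ?c3 ?i1 ?i2 ?i3.
rewrite !inE => -[/andP[c1 i1] /andP[c2 i2] /andP[c3 i3]] [m1 m2 m3].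
exists i; apply/existsP; exists a; apply/existsP; exists b; apply/existsP; exists d.
apply/existsP; exists e1; apply/existsP; exists e2; apply/existsP; exists e3.
by rewrite ab bd ad e12 e23 e13 c1 c2 c3 m1 m2 m3 i1 i2 i3.
Qed.

Lemma ramsey_propP k n :
  reflect (forall c : {ffun {set 'I_n} -> 'I_k},
             exists i, berge_triangle (colour_class c i)) (ramsey_prop k n).
Proof.
by apply: (iffP forallP) => mono c; apply/mono_berge_triangleP; apply: mono.
Qed.

Lemma not_ramsey_prop k n (f : {set 'I_n} -> nat) :
  0 < k -> (forall e : {set 'I_n}, #|e| = 3 -> f e < k) ->
  (forall i, ~ berge_triangle (colour_class f i)) -> ~~ ramsey_prop k n.
Proof.
case: k => // k _ fk free; apply/negP => /ramsey_propP/(_ [ffun e => inord (f e)]).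
case=> i tri; apply: (free i); apply: berge_triangleS tri; apply/subsetP => e.
rewrite !inE ffunE.
by case/andP=> /eqP e3 /eqP <-; rewrite e3 inordK ?eqxx //; apply: fk.
Qed.

Section BergeTriangleFree.
Variables (T : finType) (H : {set {set T}}).
Hypothesis H3 : {in H, forall e : {set T}, #|e| = 3}.
Hypothesis Hfree : ~ berge_triangle H.
Implicit Types (e f : {set T}) (u v w : T).

Definition owns e u v := [forall f in H, (u \in f) && (v \in f) ==> (f == e)].

Lemma ownsP e u v f : owns e u v -> f \in H -> u \in f -> v \in f -> f = e.
Proof.
by move=> /forall_inP own fH uf vf; apply/eqP/(implyP (own f fH)); rewrite uf vf.
Qed.

Lemma ownsC e u v : owns e u v = owns e v u.
Proof. by apply: eq_forallb_in => f _; rewrite andbC. Qed.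

Lemma owns_adjacent e u v w : e \in H -> u \in e -> v \in e -> w \in e ->
  u != v -> v != w -> u != w -> owns e u v || owns e v w.
Proof.
move=> eH ue ve we uv vw uw; apply/norP.
case=> /forall_inPn[f fH]; rewrite negb_imply => /andP[/andP[uf vf] fe].
case/forall_inPn=> g gH; rewrite negb_imply => /andP[/andP[vg wg] ge].
apply: Hfree; exists u, v, w, f, g, e; split; rewrite ?uf ?vf ?vg ?wg ?ue ?we //.
split=> //; apply: contraNneq fe => fg; subst g.
by rewrite (card3_set3 (H3 fH) uf vf wg) // -(card3_set3 (H3 eH) ue ve we).
Qed.

Definition isolated e := [forall u in e, forall v in e, (u != v) ==> owns e u v].

(* In an edge owning all three of its pairs, only the two pairs through the
   apex [pick z in e] are kept, as the three pairs would form a triangle. *)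
Definition good e u v := [&& u != v, u \in e, v \in e, owns e u v &
  isolated e ==> ([pick z in e] == Some u) || ([pick z in e] == Some v)].

Lemma goodC e u v : good e u v = good e v u.
Proof.
rewrite /good eq_sym ownsC orbC.
by case: (u \in e); case: (v \in e); rewrite ?andbF.
Qed.

Lemma good_pairs_in_edge e : e \in H ->
  exists x y z, [/\ x != y, good e x z & good e y z].
Proof.
move=> eH; have e3 := H3 eH; case: (boolP (isolated e)) => [iso | niso].
  case pz: [pick z in e] => [z|]; last by move: pz; case: pickP => // /eq_card0; rewrite e3.
  have ze : z \in e by move: pz; case: pickP => // z' z'e [<-].
  have [x [y [xy xz yz ee]]] := card3_apart e3 ze.
  have xe : x \in e by rewrite ee !inE eqxx.
  have ye : y \in e by rewrite ee !inE eqxx orbT.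
  have own a b : a \in e -> b \in e -> a != b -> owns e a b.
    by move=> ae be ab; move/forall_inP/(_ a ae)/forall_inP/(_ b be)/implyP: iso; apply.
  by exists x, y, z; rewrite /good xy xz yz xe ye ze !own // pz eqxx !orbT implybT.
have [u [v [ue ve uv nuv]]] : exists u v, [/\ u \in e, v \in e, u != v & ~~ owns e u v].
  move: niso => /forall_inPn[u ue /forall_inPn[v ve]].
  by rewrite negb_imply => /andP[uv nuv]; exists u, v.
have [z [uz vz ee]] := card3_third e3 ue ve uv.
have ze : z \in e by rewrite ee !inE eqxx orbT.
have vu : v != u by rewrite eq_sym.
have := owns_adjacent eH ve ue ze vu uz vz; rewrite ownsC (negbTE nuv) /= => ouz.
have := owns_adjacent eH ue ve ze uv vz uz; rewrite (negbTE nuv) /= => ovz.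
by exists u, v, z; rewrite /good uz vz ue ve ze ouz ovz (negbTE niso).
Qed.

Definition good_pairs e := [set p : T * T | good e p.1 p.2].

Definition good_graph := [set p : T * T | [exists e in H, good e p.1 p.2]].

Lemma card_good_pairs e : e \in H -> 4 <= #|good_pairs e|.
Proof.
move=> eH; have [x [y [z [xy gxz gyz]]]] := good_pairs_in_edge eH.
have [xz yz] : x != z /\ y != z by case/andP: gxz; case/andP: gyz.
pose s := [:: (x, z); (z, x); (y, z); (z, y)].
have /card_uniqP/= <- : uniq s.
  rewrite /= !inE !xpair_eqE (eq_sym z x) (eq_sym z y).
  by rewrite (negbTE xy) (negbTE xz) (negbTE yz) !andbF.
apply: subset_leq_card; apply/subsetP => p; rewrite !inE => /or4P[]/eqP->;
  by rewrite // goodC.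
Qed.

Lemma good_graph_sym u v : (u, v) \in good_graph -> (v, u) \in good_graph.
Proof.
by rewrite !inE => /exists_inP[e eH g]; apply/exists_inP; exists e; rewrite // goodC.
Qed.

Lemma card_good_graph : 4 * #|H| <= #|good_graph|.
Proof.
rewrite -sum1_card big_distrr /= muln1.
apply: leq_trans (_ : \sum_(e in H) #|good_pairs e| <= _); first exact: leq_sum card_good_pairs.
have -> : \sum_(e in H) #|good_pairs e| =
    \sum_(e in H) \sum_(p in good_graph) (good e p.1 p.2 : nat).
  apply: eq_bigr => e eH; rewrite -sum1_card big_mkcond [RHS]big_mkcond /=.
  apply: eq_bigr => p _; rewrite !inE.
  case g: (good e p.1 p.2); last by rewrite if_same.
  suff -> : [exists f in H, good f p.1 p.2] by [].
  by apply/exists_inP; exists e.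
rewrite exchange_big -sum1_card /=; apply: leq_sum => -[u v].
rewrite inE => /exists_inP[e eH /and5P[_ _ _ own _]] /=.
rewrite -big_mkcondr /= sum1dep_card; apply/card_le1_eqP => f g; rewrite !inE.
case/andP=> fH /and4P[_ uf vf _] /andP[gH /and4P[_ ug vg _]].
by rewrite (ownsP own fH uf vf) (ownsP own gH ug vg).
Qed.

Lemma good_graph_triangle_free a b d :
  (a, b) \in good_graph -> (b, d) \in good_graph -> (a, d) \in good_graph -> False.
Proof.
rewrite !inE => /exists_inP[e1 e1H g1] /exists_inP[e2 e2H g2] /exists_inP[e3 e3H g3].
move: (g1) (g2) (g3) => /and5P[ab a1 b1 o1 i1] /and5P[bd b2 d2 o2 i2].
move=> /and5P[ad a3 d3 o3 i3].
have [E12 E13] : e1 = e2 /\ e1 = e3.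
  have [E12|n12] := eqVneq e1 e2.
    by subst e2; split=> //; exact: ownsP o3 e1H a1 d2.
  have [E23|n23] := eqVneq e2 e3.
    by subst e3; case/eqP: n12; exact/esym/(ownsP o1 e2H a3 b2).
  have [E13|n13] := eqVneq e1 e3.
    by subst e3; case/eqP: n12; exact: ownsP o2 e1H b1 d3.
  by case: Hfree; exists a, b, d, e1, e2, e3; rewrite a1 b1 b2 d2 a3 d3.
subst e2 e3; have iso : isolated e1.
  have E : e1 = [set a; b; d] by apply: card3_set3; rewrite ?H3.
  apply/forall_inP => u; rewrite {1}E !inE => /orP[/orP[]|]/eqP->;
  apply/forall_inP => v; rewrite {1}E !inE => /orP[/orP[]|]/eqP->;
  by rewrite ?eqxx ?o1 ?o2 ?o3 ?implybT // ownsC ?o1 ?o2 ?o3 ?implybT.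
move: i1 i2 i3; rewrite iso /=; case: [pick z in e1] => // z.
rewrite !(inj_eq Some_inj) => /orP[]/eqP-> /=.
- by rewrite (negbTE ab) (negbTE ad).
- by rewrite (eq_sym b a) (negbTE ab) (negbTE bd).
Qed.

End BergeTriangleFree.

Section Mantel.
Variables (T : finType) (D : {set T * T}).
Hypothesis Dsym : forall u v, (u, v) \in D -> (v, u) \in D.
Hypothesis Dfree : forall a b d, (a, b) \in D -> (b, d) \in D -> (a, d) \in D -> False.

Definition neighbours u := [set w | (u, w) \in D].

Lemma card_pairs_from (A : {set T}) :
  #|[set p in D | p.1 \in A]| = \sum_(u in A) #|neighbours u|.
Proof.
under eq_bigr do rewrite -sum1_card.
rewrite pair_big_dep /= sum1dep_card; apply: eq_card => -[u w].
by rewrite !inE andbC.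
Qed.

Theorem mantel : 2 * #|D| <= #|T| ^ 2.
Proof.
have [T0 | /card_gt0P[v0 _]] := posnP #|T|.
  suff -> : D = set0 by rewrite cards0.
  by apply/setP => -[u w]; move: (card0_eq T0 u); rewrite !inE.
have [v _ vmax] := @arg_maxnP T v0 xpredT (fun u => #|neighbours u|) isT.
set N := neighbours v.
pose from (A : {set T}) := [set p in D | p.1 \in A].
have splitD : #|D| = #|from N| + #|from (~: N)|.
  rewrite -(cardsID [set p : T * T | p.1 \in N] D).
  by congr (_ + _); apply: eq_card => p; rewrite !inE // andbC.
have inside : #|from N| <= #|from (~: N)|.
  rewrite -(card_imset _ (can_inj swap_pairK)); apply/subset_leq_card/subsetP => q.
  case/imsetP=> -[u w]; rewrite !inE /= => /andP[uw vu] ->; rewrite /= Dsym //=.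
  by apply/negP => vw; apply: Dfree vu uw vw.
have outside : #|from (~: N)| <= #|~: N| * #|N|.
  rewrite card_pairs_from -sum_nat_const; apply: leq_sum => u _; exact: vmax.
have [AGM _] := nat_AGM2 #|~: N| #|N|; rewrite addnC cardsC in AGM.
lia.
Qed.

End Mantel.

Lemma berge_triangle_free_card (T : finType) (H : {set {set T}}) :
  {in H, forall e : {set T}, #|e| = 3} -> ~ berge_triangle H -> 8 * #|H| <= #|T| ^ 2.
Proof.
move=> H3 Hfree; apply: (@leq_trans (2 * #|good_graph H|)).
  by rewrite -[8]/(2 * 4) -mulnA leq_pmul2l //; exact: card_good_graph.
by apply: mantel; [exact: good_graph_sym | exact: good_graph_triangle_free].
Qed.

Lemma sum_card_colour_class (T C : finType) (c : {set T} -> C) :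
  \sum_(i : C) #|colour_class c i| = 'C(#|T|, 3).
Proof.
rewrite -card_draws -sum1_card (partition_big c xpredT) //=.
by apply: eq_bigr => i _; rewrite -sum1_card; apply: eq_bigl => e; rewrite !inE.
Qed.

Lemma ramsey_prop_of_count k n : k * n ^ 2 < 8 * 'C(n, 3) -> ramsey_prop k n.
Proof.
move=> cnt; apply/forallP => c; apply: contraT => nomono.
have free i : 8 * #|colour_class c i| <= n ^ 2.
  rewrite -[n in _ <= n ^ 2]card_ord; apply: berge_triangle_free_card => [e|tri].
    by rewrite inE => /andP[/eqP].
  by case/negP: nomono; apply/(mono_berge_triangleP c); exists i.
suff : 8 * 'C(n, 3) <= k * n ^ 2 by rewrite leqNgt cnt.
rewrite -{1}(card_ord n) -(sum_card_colour_class c) big_distrr /=.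
by rewrite -[k in _ <= k * _]card_ord -sum_nat_const; apply: leq_sum => i _.
Qed.

Lemma ramsey_prop_three_quarters k : ramsey_prop k (3 * k %/ 4 + 4).
Proof.
apply: ramsey_prop_of_count; set q := 3 * k %/ 4.
have q3k : 3 * k < q.+1 * 4 by apply: ltn_ceil.
have := bin_ffact (q + 4) 3; rewrite !ffactnS ffactn0 (_ : 3`! = 6) // => C3.
rewrite -(ltn_pmul2r (isT : 0 < 6)) -[8 * _ * 6]mulnA C3.
nia.
Qed.

Section MatchedTriples.
Variables (T : finType) (high : pred T) (R : rel T).
Hypothesis R_sym : symmetric R.
Hypothesis R_fun : forall u v w, R u v -> R u w -> v = w.
Variable H : {set {set T}}.
Hypothesis H_matched : {in H, forall e : {set T}, exists x y z,
  [/\ e = [set x; y; z], high x && high y, ~~ high z & R x y]}.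

Lemma low_vertex_unique e u v : e \in H -> u \in e -> v \in e ->
  ~~ high u -> ~~ high v -> u = v.
Proof.
move=> /H_matched[x [y [z [-> /andP[hx hy] _ _]]]].
by rewrite !inE => /orP[/orP[]|] /eqP-> /orP[/orP[]|] /eqP->; rewrite ?hx ?hy.
Qed.

Lemma high_vertices_related e u v : e \in H -> u \in e -> v \in e -> u != v ->
  high u -> high v -> R u v.
Proof.
move=> /H_matched[x [y [z [-> /andP[hx hy] hz rxy]]]].
by rewrite !inE => /orP[/orP[]|] /eqP-> /orP[/orP[]|] /eqP->;
  rewrite ?eqxx ?(negbTE hz) // 1?R_sym.
Qed.

Lemma matched_edge e u v u' : e \in H -> u \in e -> v \in e ->
  high u -> ~~ high v -> R u u' -> e = [set u; u'; v].
Proof.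
move=> /H_matched[x [y [z [-> /andP[hx hy] hz rxy]]]] ue ve hu hv ruu'.
have -> : v = z.
  by move: ve hv; rewrite !inE => /orP[/orP[]|] /eqP->; rewrite ?hx ?hy.
move: ue hu ruu'; rewrite !inE => /orP[/orP[]|] /eqP-> => [_ r|_ r|];
  last by rewrite (negbTE hz).
  by rewrite (R_fun r rxy).
by rewrite R_sym in rxy; rewrite (R_fun r rxy) set3C12.
Qed.

Lemma matched_edges_eq x y z exy exz eyz : x != y -> high x -> high y -> ~~ high z ->
  exy \in H -> exz \in H -> eyz \in H ->
  x \in exy -> y \in exy -> x \in exz -> z \in exz -> y \in eyz -> z \in eyz -> exz = eyz.
Proof.
move=> xy hx hy hz exyH exzH eyzH x1 y1 x2 z2 y3 z3.
have rxy := high_vertices_related exyH x1 y1 xy hx hy.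
have ryx : R y x by rewrite R_sym.
by rewrite (matched_edge exzH x2 z2 hx hz rxy) (matched_edge eyzH y3 z3 hy hz ryx) set3C12.
Qed.

Lemma matched_berge_triangle_free : ~ berge_triangle H.
Proof.
case=> a [b [d [e1 [e2 [e3 [[ab bd ad] [e12 e23 e13] [e1H e2H e3H]]]]]]].
case=> /andP[a1 b1] /andP[b2 d2] /andP[a3 d3].
have [ha|ha] := boolP (high a); have [hb|hb] := boolP (high b);
  have [hd|hd] := boolP (high d).
- case/eqP: bd; apply: R_fun (high_vertices_related e1H a1 b1 ab ha hb) _.
  exact: high_vertices_related e3H a3 d3 ad ha hd.
- by case/eqP: e23; rewrite (matched_edges_eq ab ha hb hd e1H e3H e2H a1 b1 a3 d3 b2 d2).
- by case/eqP: e12; rewrite (matched_edges_eq ad ha hd hb e3H e1H e2H a3 d3 a1 b1 d2 b2).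
- by case/eqP: bd; apply: low_vertex_unique e2H b2 d2 hb hd.
- by case/eqP: e13; rewrite (matched_edges_eq bd hb hd ha e2H e1H e3H b2 d2 b1 a1 d3 a3).
- by case/eqP: ad; apply: low_vertex_unique e3H a3 d3 ha hd.
- by case/eqP: ab; apply: low_vertex_unique e1H a1 b1 ha hb.
- by case/eqP: ab; apply: low_vertex_unique e1H a1 b1 ha hb.
Qed.

End MatchedTriples.

Lemma odd_neq_of_half_eq a b : a %/ 2 = b %/ 2 -> a != b -> odd a != odd b.
Proof.
move=> ab; have := divn_eq a 2; have := divn_eq b 2; rewrite !modn2.
by case: (odd a); case: (odd b) => //= eb ea /eqP[]; lia.
Qed.

Section BlockColouring.
Variables (c m n : nat).
Hypothesis c_gt0 : 0 < c.
Hypothesis n_le : n <= c * 2 ^ m.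

Definition block_size j := c * 2 ^ j.

Definition block j u := u %/ block_size j.

Lemma block_size_gt0 j : 0 < block_size j.
Proof. by rewrite muln_gt0 c_gt0 expn_gt0. Qed.

Lemma blockS j u : block j.+1 u = block j u %/ 2.
Proof. by rewrite /block /block_size expnSr mulnA divnMA. Qed.

Lemma block_top (u : 'I_n) : block m u = 0.
Proof. exact/divn_small/(leq_trans (ltn_ord u)). Qed.

Lemma block_mod_inj j u v :
  block j u = block j v -> u %% block_size j = v %% block_size j -> u = v.
Proof.
move=> buv muv; rewrite (divn_eq u (block_size j)) (divn_eq v (block_size j)).
by rewrite -/(block j u) -/(block j v) buv muv.
Qed.

Definition splits (e : {set 'I_n}) (w : 'I_m * 'I_n * 'I_n * 'I_n) :=
  let: (j, x, y, z) := w in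
  [&& e == [set x; y; z], x != y, block j x == block j y,
      block j z != block j x & block j.+1 z == block j.+1 x].

Lemma splits_witness (j : 'I_m) (x y z : 'I_n) : x != y ->
  block j x = block j y -> block j z != block j x -> block j.+1 z = block j.+1 x ->
  splits [set x; y; z] (j, x, y, z).
Proof. by move=> xy bxy bzx bzx'; rewrite /splits xy bzx bzx' bxy !eqxx. Qed.

Lemma splits_exists (x y z : 'I_n) : x != y -> y != z -> x != z ->
  ~ (block 0 x = block 0 y /\ block 0 y = block 0 z) ->
  exists w, splits [set x; y; z] w.
Proof.
move=> xy yz xz not0.
pose together j := (block j x == block j y) && (block j y == block j z).
have top : exists j, together j by exists m; rewrite /together !block_top.
have [j0 tj0 min] := ex_minnP top.
case: j0 tj0 min => [/andP[/eqP ? /eqP ?] _ | j tjS min]; first by case: not0.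
have jm : j < m by apply: min; rewrite /together !block_top.
have ntj : ~~ together j by apply/negP => /min; rewrite ltnn.
pose jj := Ordinal jm; have jjE : nat_of_ord jj = j by [].
move: tjS ntj; rewrite /together !blockS -jjE => /andP[/eqP hxy /eqP hyz].
have [exy|nxy] := eqVneq (block jj x) (block jj y).
  move=> /= nyz; exists (jj, x, y, z); apply: splits_witness => //.
    by rewrite exy eq_sym.
  by rewrite !blockS hxy hyz.
have [exz|nxz] := eqVneq (block jj x) (block jj z).
  move=> _; exists (jj, x, z, y); rewrite set3C12 set3_rot.
  apply: splits_witness => //; first by rewrite eq_sym.
  by rewrite !blockS hxy.
have [eyz|nyz] := eqVneq (block jj y) (block jj z).
  move=> _; exists (jj, y, z, x); rewrite set3_rot.
  apply: splits_witness => //.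
  by rewrite !blockS hxy.
by move=> _; move/eqP: nxy; move/eqP: nxz; move/eqP: nyz; lia.
Qed.

Definition residues (e : {set 'I_n}) : {set 'I_c} :=
  [set i : 'I_c | [exists u in e, u %% c == i :> nat]].

(* Level [j] uses the colours in [#|{set 'I_c}| + 2 c 2^j, #|{set 'I_c}| + 4 c 2^j). *)
Definition pair_colour j (o : bool) s := #|{set 'I_c}| + block_size j * (2 + o) + s.

Definition colour (e : {set 'I_n}) : nat :=
  if [pick w | splits e w] is Some (j, x, y, z)
  then pair_colour j (odd (block j x)) ((x + y) %% block_size j)
  else enum_rank (residues e).

Lemma colour_lt e : colour e < #|{set 'I_c}| + 2 * block_size m.
Proof.
rewrite /colour; case: pickP => [[[[j x] y] z] _|_]; last first.
  exact: leq_trans (ltn_ord _) (leq_addr _ _).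
have lt_s := ltn_pmod (x + y) (block_size_gt0 j).
have : block_size j.+1 <= block_size m by rewrite leq_mul2l leq_pexp2l ?orbT.
rewrite /pair_colour /block_size expnSr mulnA; case: (odd _) => /=; lia.
Qed.

Lemma pair_colour_inj j1 j2 o1 o2 s1 s2 : s1 < block_size j1 -> s2 < block_size j2 ->
  pair_colour j1 o1 s1 = pair_colour j2 o2 s2 -> [/\ j1 = j2, o1 = o2 & s1 = s2].
Proof.
move=> lt1 lt2; rewrite /pair_colour => eq12.
have mono i j : i < j -> block_size i * 2 <= block_size j.
  by move=> ij; rewrite /block_size -mulnA -expnSr leq_mul2l leq_pexp2l ?ij ?orbT.
have j12 : j1 = j2.
  by case: (ltngtP j1 j2) => // /mono; move: eq12; case: o1; case: o2 => /=; lia.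
by subst j2; move: eq12; case: o1; case: o2 => /= eq12; split => //; lia.
Qed.

Lemma colour_splits e w : splits e w -> exists j x y z, splits e (j, x, y, z) /\
  colour e = pair_colour j (odd (block j x)) ((x + y) %% block_size j).
Proof.
move=> sw; rewrite /colour; case: pickP => [[[[j x] y] z] s|/(_ w)].
  by exists j, x, y, z.
by rewrite sw.
Qed.

Lemma colour_unsplit e : (forall w, ~~ splits e w) -> colour e = enum_rank (residues e).
Proof. by move=> ns; rewrite /colour; case: pickP => // w; rewrite (negbTE (ns w)). Qed.

Lemma unsplit_block (x y z : 'I_n) : x != y -> y != z -> x != z ->
  (forall w, ~~ splits [set x; y; z] w) ->
  {in [set x; y; z] &, forall u v : 'I_n, block 0 u = block 0 v}.
Proof.
move=> xy yz xz ns; have [bxy byz] : block 0 x = block 0 y /\ block 0 y = block 0 z.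
  have [/andP[/eqP ? /eqP ?] // | not0] :=
    boolP ((block 0 x == block 0 y) && (block 0 y == block 0 z)).
  have [w sw] : exists w, splits [set x; y; z] w.
    by apply: splits_exists => // -[bxy byz]; rewrite bxy byz !eqxx in not0.
  by move: (ns w); rewrite sw.
by move=> u v; rewrite !inE => /orP[/orP[]|]/eqP-> /orP[/orP[]|]/eqP->; rewrite ?bxy ?byz.
Qed.

Lemma low_colour_class_free i :
  i < #|{set 'I_c}| -> ~ berge_triangle (colour_class colour i).
Proof.
move=> low; apply: linear_berge_triangle_free => e f eH fH u ue uf.
have unsplit g : g \in colour_class colour i -> forall w, ~~ splits g w.
  rewrite inE => /andP[_ /eqP gi] w; apply/negP => /colour_splits[j [x [y [z [_ cg]]]]].
  by move: low; rewrite -gi cg /pair_colour -addnA ltnNge leq_addr.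
have same_block g : g \in colour_class colour i ->
    {in g &, forall v w : 'I_n, block 0 v = block 0 w}.
  move=> gH; have := gH; rewrite inE => /andP[/eqP/card3P[x [y [z [xy yz xz ge]]]] _].
  by rewrite ge; apply: unsplit_block => //; rewrite -ge; apply: unsplit.
have res_ef : residues e = residues f.
  apply: enum_rank_inj; apply: val_inj.
  rewrite /= -(colour_unsplit (unsplit e eH)) -(colour_unsplit (unsplit f fH)).
  by move: eH fH; rewrite !inE => /andP[_ /eqP->] /andP[_ /eqP->].
have ef : e \subset f.
  apply/subsetP => v ve.
  have : Ordinal (ltn_pmod v c_gt0) \in residues f.
    by rewrite -res_ef inE; apply/exists_inP; exists v.
  rewrite inE => /exists_inP[v' v'f /eqP vv'].
  suff -> : v = v' by [].
  apply/val_inj/(block_mod_inj (j := 0)); last by rewrite /block_size expn0 muln1.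
  by rewrite (same_block e eH v u) // (same_block f fH v' u).
apply/eqP; rewrite eqEcard ef.
by move: eH fH; rewrite !inE => /andP[/eqP-> _] /andP[/eqP-> _].
Qed.

Lemma high_colour_class_free i :
  #|{set 'I_c}| <= i -> ~ berge_triangle (colour_class colour i).
Proof.
move=> high; set H := colour_class colour i.
have split_edge e : e \in H -> exists j x y z, splits e (j, x, y, z) /\
    colour e = pair_colour j (odd (block j x)) ((x + y) %% block_size j).
  rewrite inE => /andP[_ /eqP ei]; case: (pickP (splits e)) => [w sw|ns].
    exact: colour_splits sw.
  exfalso; move: high; rewrite -ei colour_unsplit; last by move=> w; rewrite ns.
  by rewrite leqNgt ltn_ord.
have [->|[e1 e1H]] := set_0Vmem H.
  by case=> ? [? [? [? [? [? [_ _ []]]]]]]; rewrite inE.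
have [j [x1 [y1 [z1 [_ col1]]]]] := split_edge e1 e1H.
pose o := odd (block j x1); pose s := (x1 + y1) %% block_size j.
apply: (matched_berge_triangle_free (high := fun u : 'I_n => odd (block j u) == o)
  (R := fun u v : 'I_n => (block j u == block j v) && ((u + v) %% block_size j == s))).
- by move=> u v; rewrite eq_sym addnC.
- move=> u v w /andP[/eqP buv /eqP suv] /andP[/eqP buw /eqP suw]; apply/val_inj.
  apply: (block_mod_inj (j := j)); first by rewrite -buv -buw.
  by apply/eqP; rewrite -(eqn_modDl u) suv suw.
- move=> e eH; have [j' [x [y [z [sxyz col]]]]] := split_edge e eH.
  have ee1 : colour e = colour e1.
    by move: eH e1H; rewrite !inE => /andP[_ /eqP->] /andP[_ /eqP->].
  move: col; rewrite ee1 col1 => /esym/pair_colour_inj[];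
    try exact: ltn_pmod _ (block_size_gt0 _).
  move=> /val_inj jj' ox sxy; subst j'.
  case/and5P: sxyz => /eqP-> xy /eqP bxy bzx /eqP bzx'.
  exists x, y, z; rewrite /o /s -bxy -ox -sxy !eqxx; split=> //.
  by apply: odd_neq_of_half_eq bzx; rewrite -!blockS.
Qed.

Lemma not_ramsey_prop_blocks k :
  #|{set 'I_c}| + 2 * block_size m <= k -> ~~ ramsey_prop k n.
Proof.
move=> large; apply: (not_ramsey_prop (f := colour)).
- by apply: leq_trans large; rewrite addn_gt0 muln_gt0 block_size_gt0 orbT.
- by move=> e _; apply: leq_trans (colour_lt e) large.
- move=> i; case: (ltnP i #|{set 'I_c}|).
    exact: low_colour_class_free.
  exact: high_colour_class_free.
Qed.

End BlockColouring.

Lemma card_set (T : finType) : #|{set T}| = 2 ^ #|T|.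
Proof.
rewrite -cardsT -card_powerset; apply: eq_card => A.
by rewrite powersetE subsetT.
Qed.

Lemma dyadic_approx C X : 0 < C -> C <= X ->
  exists c m, [/\ C <= c, c < 2 * C, c * 2 ^ m <= X & X < c.+1 * 2 ^ m].
Proof.
move=> C_gt0 CX; pose fits j := C * 2 ^ j <= X.
have fits_le j : fits j -> j <= X.
  move=> fj; apply: leq_trans (ltnW (ltn_expl j (isT : 1 < 2))) _.
  exact: leq_trans (leq_pmull _ C_gt0) fj.
have fits0 : exists j, fits j by exists 0; rewrite /fits muln1.
have [m fm maxm] := ex_maxnP fits0 fits_le.
have nfm : ~~ fits m.+1 by apply/negP => /maxm; rewrite ltnn.
have p_gt0 : 0 < 2 ^ m by rewrite expn_gt0.
exists (X %/ 2 ^ m), m; split.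
- by rewrite leq_divRL.
- by rewrite ltn_divLR // (mulnC 2 C) -mulnA -expnS ltnNge.
- exact: leq_divM.
- exact: ltn_ceil.
Qed.

Lemma R3_BK3_spec k :
  ramsey_prop k (R3_BK3 k) /\ forall n, ramsey_prop k n -> R3_BK3 k <= n.
Proof.
rewrite /R3_BK3; case: excluded_middle_informative => [ex|[]].
  by case: ex_minnP => r.
by exists (3 * k %/ 4 + 4); exact: ramsey_prop_three_quarters.
Qed.

Lemma R3_BK3_upper k : R3_BK3 k <= 3 * k %/ 4 + 4.
Proof. by have [_] := R3_BK3_spec k; apply; exact: ramsey_prop_three_quarters. Qed.

Lemma R3_BK3_gt c m k : 0 < c -> 2 ^ c + 2 * (c * 2 ^ m) <= k -> c * 2 ^ m < R3_BK3 k.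
Proof.
move=> c_gt0 large; rewrite ltnNge; apply/negP => le_n.
have [+ _] := R3_BK3_spec k; apply/negP.
by apply: (not_ramsey_prop_blocks c_gt0 le_n); rewrite card_set card_ord.
Qed.

Lemma R3_BK3_lower C k : 0 < C -> 2 ^ (2 * C) + 2 * C <= k ->
  C * (k - 2 ^ (2 * C)) <= 2 * C.+1 * R3_BK3 k + C.
Proof.
(* Use the block colouring with [c 2^m] the best approximation of
   [(k - 2^(2C)) / 2] from below with [C <= c < 2 C]. *)
move=> C_gt0 large; set B := 2 ^ (2 * C); set X := (k - B) %/ 2.
have CX : C <= X by rewrite leq_divRL //; lia.
have [c [m [Cc c2C cX Xc]]] := dyadic_approx C_gt0 CX.
have lt_R : c * 2 ^ m < R3_BK3 k.
  apply: R3_BK3_gt; first exact: leq_trans Cc.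
  have : 2 ^ c <= B by rewrite leq_pexp2l // ltnW.
  have : X * 2 <= k - B by apply: leq_divM.
  lia.
have : C * c.+1 <= C.+1 * c by nia.
have : k - B <= X * 2 + 1 by rewrite {1}(divn_eq (k - B) 2) leq_add2l -ltnS ltn_pmod.
move: cX Xc lt_R; rewrite -/X; move: (2 ^ m) => p.
nia.
Qed.

Import Order.TTheory GRing.Theory Num.Theory.
Local Open Scope ring_scope.

Lemma eventually_nat_le_eps_mul (a : nat) (eps : rat) : 0 < eps ->
  exists K : nat, forall k : nat, (K <= k)%N -> a%:R <= eps * k%:R.
Proof.
move=> eps_gt0; exists (Num.Def.archi_bound (a%:R / eps)) => k Kk.
rewrite mulrC -ler_pdivrMr //.
apply: le_trans (ltW (archi_boundP _)) _; first by rewrite divr_ge0 // ltW.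
by rewrite ler_nat.
Qed.

Lemma R3_BK3_upper_eps (eps : rat) k :
  4 <= eps * k%:R -> (R3_BK3 k)%:R <= (3 / 4 + eps) * k%:R.
Proof.
move=> large; have : (4 * R3_BK3 k <= 3 * k + 16)%N.
  by have := R3_BK3_upper k; have := leq_divM (3 * k) 4; lia.
rewrite -(ler_nat rat) natrD !natrM => ?; lra.
Qed.

Lemma R3_BK3_lower_eps (eps : rat) C k : (0 < C)%N -> 1 <= eps * C%:R ->
  (2 ^ (2 * C) + 2 * C <= k)%N -> (2 ^ (2 * C)).+1%:R <= eps * k%:R ->
  (1 / 2 - eps) * k%:R <= (R3_BK3 k)%:R.
Proof.
move=> C_gt0 epsC large epsk; have := R3_BK3_lower C_gt0 large.
have Bk : (2 ^ (2 * C) <= k)%N by lia.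
rewrite -(ler_nat rat) natrD !natrM natrB // -[C.+1]addn1 natrD.
move: epsk epsC; rewrite -addn1 natrD.
have : 0 < C%:R :> rat by rewrite ltr0n.
have : 0 <= k%:R :> rat by [].
move: (C%:R) (k%:R) ((2 ^ (2 * C))%:R) ((R3_BK3 k)%:R) => c kk b r kk0 c0 epsk epsC h.
(* After scaling by [2 (c + 1)] it remains that [kk + c (b + 1) <= 2 (c + 1) eps kk]. *)
have h1 : kk <= eps * c * kk by rewrite -[X in X <= _]mul1r ler_wpM2r.
have h2 : c * (b + 1) <= c * (eps * kk) by rewrite ler_wpM2l // ltW.
rewrite -(ler_pM2l (_ : 0 < 2 * (c + 1))); last by lra.
nra.
Qed.

Theorem theorem1 :
  forall eps : rat, 0 < eps ->
  exists K : nat, forall k : nat, (K <= k)%N ->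
    (1 / 2 - eps) * k%:R <= (R3_BK3 k)%:R :> rat /\
    (R3_BK3 k)%:R <= (3 / 4 + eps) * k%:R :> rat.
Proof.
move=> eps eps_gt0; have [C0 epsC0] := eventually_nat_le_eps_mul 1 eps_gt0.
set C := C0.+1; have epsC : 1 <= eps * C%:R by apply: epsC0; exact: leqnSn.
set B := (2 ^ (2 * C))%N; have [K epsK] := eventually_nat_le_eps_mul (B + 4) eps_gt0.
exists (K + B + 2 * C)%N => k Kk.
have /epsK : (K <= k)%N by lia.
rewrite natrD => epsk; split.
- apply: R3_BK3_lower_eps epsC _ _ => //; first by lia.
  by apply: le_trans epsk; rewrite -addn1 natrD lerD2l.
- by apply: R3_BK3_upper_eps; apply: le_trans epsk; rewrite lerDr.
Qed.
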